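(* For any continuous probability measure $\mu$ on $\mathbb{R}^n$ and any $\alpha_1,\ldots,\alpha_4\in(0,1)$ with $\sum_{i=1}^4\alpha_i=1$, there exist two oriented hyperplanes $H_1,H_2$ such that $H_1^+\cap H_2^+$, $H_1^-\cap H_2^+$, $H_1^+\cap H_2^-$, $H_1^-\cap H_2^-$ have $\mu$-measure $\alpha_1,\alpha_2,\alpha_3,\alpha_4$, respectively.
   Context: A continuous probability measure on $\mathbb{R}^n$ is a Borel probability measure absolutely continuous with respect to Lebesgue measure. For an oriented hyperplane $H$, $H^+$ denotes the closed half-space in the direction of its normal and $H^-$ the closed half-space in the direction of the reverse normal. *)

(* R^n is modelled as [n.-tuple R], equipped with the
   library's product (Borel) sigma-algebra generated by the coordinate maps. *)
From HB Require Import structures.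
From mathcomp Require Import all_boot all_order all_algebra.
From mathcomp Require Import all_classical all_reals all_analysis.
Set Implicit Arguments. Unset Strict Implicit. Unset Printing Implicit Defensive.
Import Order.TTheory GRing.Theory Num.Theory.
Local Open Scope classical_set_scope.
Local Open Scope ring_scope.

Section Defs.
Variables (R : realType) (n : nat).

Definition box (a b : n.-tuple R) : set (n.-tuple R) :=
  [set x | forall i : 'I_n, tnth a i <= tnth x i <= tnth b i].

Definition box_vol (a b : n.-tuple R) : R := \prod_(i < n) (tnth b i - tnth a i).

Definition lebesgue_null (A : set (n.-tuple R)) : Prop :=
  forall eps : R, 0 < eps ->
    exists a b : nat -> n.-tuple R,
      (forall k (i : 'I_n), tnth (a k) i <= tnth (b k) i) /\
      A `<=` \bigcup_k box (a k) (b k) /\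
      (\sum_(0 <= k <oo) (box_vol (a k) (b k))%:E < eps%:E)%E.

Definition lebesgue_abs_continuous (mu : set (n.-tuple R) -> \bar R) : Prop :=
  forall A : set (n.-tuple R), measurable A -> lebesgue_null A -> mu A = 0%E.

Definition continuous_probability (mu : probability (n.-tuple R) R) : Prop :=
  lebesgue_abs_continuous mu.

Definition dotp (w x : n.-tuple R) : R := \sum_(i < n) tnth w i * tnth x i.

(* An oriented hyperplane H = {x | <w,x> = c} is given by a nonzero normal w
   and an offset c; H^+ is the closed half-space in the direction of w, H^-
   the closed half-space in the direction of -w. *)
Definition nonzero_vec (w : n.-tuple R) : Prop := exists i : 'I_n, tnth w i != 0.

Definition hplus (w : n.-tuple R) (c : R) : set (n.-tuple R) := [set x | c <= dotp w x].
Definition hminus (w : n.-tuple R) (c : R) : set (n.-tuple R) := [set x | dotp w x <= c].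

End Defs.

(* The first hyperplane H1 = {x_0 = c1} is chosen to cut mu into masses a1 + a3 and
   a2 + a4. The second hyperplane is taken from a family whose normal turns from e_0 to
   -e_0 inside the (x_0, x_1)-plane; every hyperplane of the family is mu-null, so the
   masses f t c and g t c that H1^+ and H1^- place on the positive side of the hyperplane
   with parameter t and offset c depend continuously on (t, c) and decrease in c.
   At t = 0 the family is parallel to H1 and at t = 1 it contains H1^- itself; a
   connectedness argument in t followed by the intermediate value theorem in c yields
   (s, c) with f s c = a1 and g s c = a2, and the remaining two quadrants get a3 and a4. *)

From HB Require Import structures.
From mathcomp Require Import all_boot all_order all_algebra.
From mathcomp Require Import all_classical all_reals all_analysis.
From mathcomp Require Import ring lra measurable_realfun.
Import Order.TTheory GRing.Theory Num.Theory.
Import numFieldNormedType.Exports.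
Import Num.Def.
Set Implicit Arguments. Unset Strict Implicit. Unset Printing Implicit Defensive.
Local Open Scope classical_set_scope.
Local Open Scope ring_scope.

Lemma maxrBmin (R : realDomainType) (u v : R) : maxr u v - minr u v = `|u - v|.
Proof.
rewrite maxEle minEle; have [uv|uv] := leP u v.
  by rewrite distrC ger0_norm // subr_ge0.
by rewrite ger0_norm // subr_ge0 ltW.
Qed.

Section RealLemmas.
Variable R : realType.

Lemma ivt_unordered (f : R -> R) (x1 x2 v : R) : continuous f ->
  f x1 <= v -> v <= f x2 -> exists c, f c = v.
Proof.
move=> fc h1 h2; have [x12|x21] := leP x1 x2.
  have hv : minr (f x1) (f x2) <= v <= maxr (f x1) (f x2).
    by rewrite ge_min le_max h1 h2 orbT.
  by have [c _ fcv] := IVT x12 (continuous_subspaceT fc) hv; exists c.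
have hv : minr (f x2) (f x1) <= v <= maxr (f x2) (f x1).
  by rewrite ge_min le_max h1 h2 !orbT.
by have [c _ fcv] := IVT (ltW x21) (continuous_subspaceT fc) hv; exists c.
Qed.

Lemma cvg_lt_gt_ball (f g : R -> R) (s a b : R) :
  f t @[t --> s] --> f s -> g t @[t --> s] --> g s -> f s < a -> b < g s ->
  exists2 d, 0 < d & forall t, `|s - t| < d -> f t < a /\ b < g t.
Proof.
move=> fs gs fa bg.
have [d1 /= d10 Hf] := @cvgr_lt _ _ _ _ f (f s) fs a fa.
have [d2 /= d20 Hg] := @cvgr_gt _ _ _ _ g (g s) gs b bg.
exists (minr d1 d2); first by rewrite lt_min d10 d20.
by move=> t; rewrite lt_min => /andP[t1 t2]; split; [exact: Hf | exact: Hg].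
Qed.

(* The library's [cvg_nbhsP] needs a [metricType], of which [R] is not an instance. *)
Lemma cvg_nbhs_seq (f : R -> R) (s l : R) :
  (forall u : nat -> R, u k @[k --> \oo] --> s -> f (u k) @[k --> \oo] --> l) ->
  f x @[x --> s] --> l.
Proof.
move=> fseq; apply/cvgrPdist_lt => e e0; apply/nbhs_normP; apply: contrapT => far.
have near_far k : exists x, `|s - x| < harmonic k /\ e <= `|l - f x|.
  apply: contrapT => /forallNP nk; apply: far; exists (harmonic k); first exact: harmonic_gt0.
  move=> x /= sx; have /not_andP[//|/negP] := nk x; by rewrite -ltNge.
have [u hu] := choice near_far.
have us : u k @[k --> \oo] --> s.
  apply/cvgrPdist_lt => d d0; near=> k; apply: lt_trans (hu k).1 _; near: k.
  exact: (@cvgr_lt _ _ _ _ (@harmonic R) 0 (@cvg_harmonic R) d d0).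
have /cvgrPdist_lt /(_ e e0) [N _ HN] := fseq u us.
by have := HN N (leqnn N); rewrite /= ltNge (hu N).2.
Unshelve. all: by end_near.
Qed.

(* Each t satisfies [lower t] or [upper t] (monotonicity in c), both conditions are
   closed in t, and [lower] holds at 0 but not at 1; so both hold at the supremum s of
   the [lower] set, and then the intermediate value theorem in c finds the crossing. *)
Section TwoParameterIVT.
Variables (f g : R -> R -> R) (a b : R).
Hypothesis f_cont_t : forall s c, f t c @[t --> s] --> f s c.
Hypothesis g_cont_t : forall s c, g t c @[t --> s] --> g s c.
Hypothesis f_cont_c : forall t, continuous (f t).
Hypothesis g_cont_c : forall t, continuous (g t).
Hypothesis f_antitone : forall t c c', c <= c' -> f t c' <= f t c.
Hypothesis g_antitone : forall t c c', c <= c' -> g t c' <= g t c.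
Hypothesis f_above : forall t, exists c, a < f t c.
Hypothesis f_below : forall t, exists c, f t c < a.

Let lower t := forall c, f t c < a -> g t c <= b.
Let upper t := forall c, a < f t c -> b <= g t c.

Let lower_or_upper t : lower t \/ upper t.
Proof.
rewrite /lower /upper; apply: contrapT.
move=> /not_orP[/existsNP[c1 /not_implyP[fc1 /negP]]]; rewrite -ltNge => gc1.
move=> /existsNP[c2 /not_implyP[fc2 /negP]]; rewrite -ltNge => gc2.
have [c12|c21] := leP c1 c2.
  by have := f_antitone t c12; lra.
by have := g_antitone t (ltW c21); lra.
Qed.

Let not_lower_ball s : ~ lower s ->
  exists2 d, 0 < d & forall t, `|s - t| < d -> ~ lower t.
Proof.
rewrite /lower => /existsNP[c /not_implyP[fc /negP]]; rewrite -ltNge => gc.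
have [d d0 Hd] := cvg_lt_gt_ball (@f_cont_t s c) (@g_cont_t s c) fc gc.
by exists d => // t /Hd[ft gt] /(_ c ft); lra.
Qed.

Let not_upper_ball s : ~ upper s ->
  exists2 d, 0 < d & forall t, `|s - t| < d -> ~ upper t.
Proof.
rewrite /upper => /existsNP[c /not_implyP[fc /negP]]; rewrite -ltNge => gc.
have [d d0 Hd] := cvg_lt_gt_ball (@g_cont_t s c) (@f_cont_t s c) gc fc.
by exists d => // t /Hd[gt ft] /(_ c ft); lra.
Qed.

Let lower_and_upper_at_crossing s : lower s -> upper s ->
  exists c, f s c = a /\ g s c = b.
Proof.
move=> ls us; have [clo flo] := f_above s; have [chi fhi] := f_below s.
pose K c := (f s c - a) + (g s c - b).
have Kc : continuous K.
  move=> c; apply: cvgD; apply: cvgB;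
    [exact: f_cont_c | exact: cvg_cst | exact: g_cont_c | exact: cvg_cst].
have Khi : K chi <= 0 by have := ls _ fhi; rewrite /K; lra.
have Klo : 0 <= K clo by have := us _ flo; rewrite /K; lra.
have [c Kc0] := ivt_unordered Kc Khi Klo.
exists c; move: Kc0; rewrite /K; have [fa|fa|fa] := ltgtP (f s c) a.
- by have := ls c fa; lra.
- by have := us c fa; lra.
- lra.
Qed.

Lemma two_parameter_ivt :
  (forall c, f 0 c < a -> g 0 c <= b) -> (exists c, f 1 c < a /\ b < g 1 c) ->
  exists s c, f s c = a /\ g s c = b.
Proof.
move=> l0 [c1 [fc1 gc1]].
have nl1 : ~ lower 1 by move/(_ c1 fc1); lra.
pose S := [set t : R | 0 <= t <= 1 /\ lower t].
have S0 : S 0 by split => //; rewrite lexx ler01.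
have hS : has_sup S by split; [exists 0 | exists 1 => t [/andP[]]].
pose s := sup S.
have s0 : 0 <= s := sup_upper_bound hS S0.
have s1 : s <= 1 by apply: ge_sup; [exists 0 | move=> t [/andP[]]].
have ls : lower s.
  apply: contrapT => /not_lower_ball[d d0 Hd].
  have [t St st] := sup_adherent d0 hS.
  have ts : t <= s := sup_upper_bound hS St.
  apply: (Hd t _ St.2); rewrite ger0_norm ?subr_ge0 //.
  by move: st; rewrite -/s; lra.
have s_lt1 : s < 1 by rewrite lt_neqAle s1 andbT; apply: contraPneq nl1 => <-.
have us : upper s.
  apply: contrapT => /not_upper_ball[d d0 Hd].
  pose t := s + minr d (1 - s) / 2.
  have m0 : 0 < minr d (1 - s) by rewrite lt_min d0 subr_gt0.
  have md : minr d (1 - s) <= d by rewrite ge_min lexx.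
  have m1 : minr d (1 - s) <= 1 - s by rewrite ge_min lexx orbT.
  have [lt|ut] := lower_or_upper t.
    have : t <= s.
      by apply: (sup_upper_bound hS); split => //; rewrite /t; apply/andP; split; lra.
    by rewrite /t; lra.
  by apply: (Hd t) => //; rewrite /t opprD addrA subrr add0r normrN ger0_norm; lra.
by exists s; exact: lower_and_upper_at_crossing.
Qed.

End TwoParameterIVT.
End RealLemmas.

Section MeasurableLevelSets.
Context d (T : measurableType d) (R : realType).

Lemma measurable_preimage (h : T -> R) (Y : set R) : measurable_fun setT h ->
  measurable Y -> measurable [set x | Y (h x)].
Proof. by move=> mh mY; have := mh measurableT Y mY; rewrite setTI. Qed.

Lemma measurable_superlevel (h : T -> R) c : measurable_fun setT h ->
  measurable [set x | c <= h x].
Proof.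
move=> mh; have := measurable_preimage mh (measurable_itv `[c, +oo[).
by congr measurable; apply/seteqP; split => x /=; rewrite in_itv /= andbT.
Qed.

Lemma measurable_sublevel (h : T -> R) c : measurable_fun setT h ->
  measurable [set x | h x <= c].
Proof.
move=> mh; have := measurable_preimage mh (measurable_itv `]-oo, c]).
by congr measurable; apply/seteqP; split => x /=; rewrite in_itv.
Qed.

Lemma measurable_level (h : T -> R) c : measurable_fun setT h ->
  measurable [set x | h x = c].
Proof. by move=> mh; exact: measurable_preimage mh (measurable_set1 c). Qed.

Lemma near_superlevel_mem (E : set T) (h_ : nat -> T -> R) h (c_ : nat -> R) c x :
  h_ k x @[k --> \oo] --> h x -> c_ k @[k --> \oo] --> c -> h x != c ->
  \forall k \near \oo,
    (x \in E `&` [set y | c_ k <= h_ k y]) = (x \in E `&` [set y | c <= h y]).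
Proof.
move=> hx cc; have hcx : h_ k x - c_ k @[k --> \oo] --> h x - c by exact: cvgB.
rewrite neq_lt => /orP[hxc|hxc].
- have hxc0 : h x - c < 0 by rewrite subr_lt0.
  have [N _ HN] := @cvgr_lt _ _ _ _ _ _ hcx 0 hxc0.
  exists N => // k /HN /= hk.
  by apply/idP/idP; rewrite !inE /= => -[Ex]; rewrite -subr_ge0 => ?; lra.
- have hxc0 : 0 < h x - c by rewrite subr_gt0.
  have [N _ HN] := @cvgr_gt _ _ _ _ _ _ hcx 0 hxc0.
  exists N => // k /HN /= hk.
  by apply/idP/idP; rewrite !inE /= => -[Ex]; rewrite -subr_ge0 => ?; split => //; lra.
Qed.

End MeasurableLevelSets.

Section SuperlevelSets.
Context d (T : measurableType d) (R : realType) (mu : {finite_measure set T -> \bar R}).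

Lemma fineK_measure (A : set T) : measurable A -> (fine (mu A))%:E = mu A.
Proof. by move=> mA; rewrite fineK // fin_num_measure. Qed.

Variables (E : set T) (mE : measurable E).

Lemma measure_superlevel_antitone (h : T -> R) c c' : measurable_fun setT h ->
  c <= c' -> fine (mu (E `&` [set x | c' <= h x])) <= fine (mu (E `&` [set x | c <= h x])).
Proof.
move=> mh cc'; have mI c'' := measurableI _ _ mE (measurable_superlevel c'' mh).
apply: fine_le; rewrite ?fin_num_measure //.
by apply: le_measure; rewrite ?inE // => x [Ex /= ?]; split => //=; exact: le_trans cc' _.
Qed.

Lemma measure_superlevel_sublevel (h : T -> R) c : measurable_fun setT h ->
  mu [set x | h x = c] = 0%E ->
  fine (mu (E `&` [set x | c <= h x])) + fine (mu (E `&` [set x | h x <= c])) = fine (mu E).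
Proof.
move=> mh hc0; set A := E `&` _; set B := E `&` _.
have mA : measurable A := measurableI _ _ mE (measurable_superlevel c mh).
have mB : measurable B := measurableI _ _ mE (measurable_sublevel c mh).
have AB : A `|` B = E.
  apply/seteqP; split => [x [[]|[]] //|x Ex].
  by have [cx|xc] := leP c (h x); [left | right; split => //; exact: ltW].
have AB0 : mu (A `&` B) = 0%E.
  apply: subset_measure0 (measurableI _ _ mA mB) (measurable_level c mh) _ hc0.
  by move=> x [[_ /= cx] [_ /= xc]]; apply/eqP; rewrite eq_le cx xc.
apply: EFin_inj; rewrite EFinD !fineK_measure //.
have Afin : (mu A < +oo)%E by rewrite ltey_eq fin_num_measure.
by rewrite -[in RHS]AB measureUfinl // [X in (_ - X)%E](_ : _ = 0%E) ?sube0.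
Qed.

Lemma cvg_measure_superlevel (h_ : nat -> T -> R) (h : T -> R) (c_ : nat -> R) c :
  (forall k, measurable_fun setT (h_ k)) -> measurable_fun setT h ->
  (forall x, h_ k x @[k --> \oo] --> h x) -> c_ k @[k --> \oo] --> c ->
  mu [set x | h x = c] = 0%E ->
  fine (mu (E `&` [set x | c_ k <= h_ k x])) @[k --> \oo] -->
  fine (mu (E `&` [set x | c <= h x])).
Proof.
move=> mh_ mh hh cc hc0.
pose A k := E `&` [set x | c_ k <= h_ k x]; pose A0 := E `&` [set x | c <= h x].
have mA k : measurable (A k) := measurableI _ _ mE (measurable_superlevel _ (mh_ k)).
have mA0 : measurable A0 := measurableI _ _ mE (measurable_superlevel _ mh).
have indA x : h x != c -> (\1_(A k) x)%:E @[k --> \oo] --> ((\1_A0 x)%:E : \bar R).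
  move=> hxc; apply: cvg_near_cst.
  apply: filterS (near_superlevel_mem E (hh x) cc hxc) => k.
  by rewrite !indicE => ->.
have := @dominated_convergence _ _ R mu setT measurableT
  (fun k x => (\1_(A k) x)%:E) (fun x => (\1_A0 x)%:E) (EFin \o cst 1).
case.
- by move=> k; apply/measurable_EFinP; exact: measurable_indic.
- by apply/measurable_EFinP; exact: measurable_indic.
- exists [set x | h x = c]; split => //; first exact: measurable_level c mh.
  by move=> x /=; apply: contra_notP => hxc _; apply: indA; exact/eqP.
- exact: finite_measure_integrable_cst.
- apply: aeW => x k _ /=; rewrite indicE.
  by case: (x \in _); rewrite /= ?normr1 ?normr0 lee_fin.
move=> _ _; rewrite integral_indic // setIT -[X in _ --> X]fineK_measure //.
under eq_fun do rewrite integral_indic // setIT.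
by move/fine_cvg.
Qed.

Lemma measure_superlevel_gt (h : T -> R) v : measurable_fun setT h ->
  v < fine (mu E) -> exists c, v < fine (mu (E `&` [set x | c <= h x])).
Proof.
move=> mh vE; pose F k := E `&` [set x | - k%:R <= h x].
have mF k : measurable (F k) := measurableI _ _ mE (measurable_superlevel _ mh).
have UF : \bigcup_k F k = E.
  apply/seteqP; split => [x [k _ []] //|x Ex]; exists (truncn `|h x|).+1 => //.
  split => //=; have := truncnS_gt `|h x|; have := ler_norm (- h x).
  by rewrite normrN; lra.
have ndF : nondecreasing_seq F.
  move=> k m km; apply/subsetPset => x [Ex /= kx]; split => //=.
  by apply: le_trans kx; rewrite lerN2 ler_nat.
have mUF : measurable (\bigcup_k F k) by rewrite UF.
have FE : fine (mu (F k)) @[k --> \oo] --> fine (mu E).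
  apply: (@fine_cvg _ _ _ _ (fun k => mu (F k))).
  by rewrite fineK_measure // -[in X in _ --> X]UF; exact: nondecreasing_cvg_mu.
have [N _ HN] := @cvgr_gt _ _ _ _ _ _ FE v vE.
by exists (- N%:R); exact: HN N (leqnn N).
Qed.

Lemma measure_superlevel_lt (h : T -> R) v : measurable_fun setT h ->
  0 < v -> exists c, fine (mu (E `&` [set x | c <= h x])) < v.
Proof.
move=> mh v0; pose F k := E `&` [set x | k%:R <= h x].
have mF k : measurable (F k) := measurableI _ _ mE (measurable_superlevel _ mh).
have IF : \bigcap_k F k = set0.
  apply/seteqP; split => [x IFx|//]; have [_ /=] := IFx (truncn `|h x|).+1 I.
  have := truncnS_gt `|h x|; have := ler_norm (h x); lra.
have niF : nonincreasing_seq F.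
  move=> k m km; apply/subsetPset => x [Ex /= kx]; split => //=.
  by apply: le_trans kx; rewrite ler_nat.
have mIF : measurable (\bigcap_k F k) by rewrite IF.
have F0fin : (mu (F 0%N) < +oo)%E by rewrite ltey_eq fin_num_measure.
have FE : fine (mu (F k)) @[k --> \oo] --> 0.
  apply: (@fine_cvg _ _ _ _ (fun k => mu (F k))).
  have <- : mu (\bigcap_k F k) = 0%:E by rewrite IF measure0.
  exact: nonincreasing_cvg_mu.
have [N _ HN] := @cvgr_lt _ _ _ _ _ _ FE v v0.
by exists N%:R; exact: HN N (leqnn N).
Qed.

End SuperlevelSets.

Section LebesgueNull.
Variables (R : realType) (n : nat).

(* Boxes beyond the N given ones are degenerate; this needs [0 < n], since an empty
   product of side lengths is 1. *)
Lemma lebesgue_null_finite_cover (A : set (n.-tuple R)) : (0 < n)%N ->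
  (forall eps, 0 < eps -> exists (N : nat) (a b : nat -> n.-tuple R),
    [/\ forall k i, tnth (a k) i <= tnth (b k) i,
        A `<=` \bigcup_(k in `I_N) box (a k) (b k) &
        \sum_(k < N) box_vol (a k) (b k) < eps]) ->
  lebesgue_null A.
Proof.
move=> n0 cover eps eps0; have [N [a [b [ab Acov vol]]]] := cover eps eps0.
pose a' k := if (k < N)%N then a k else b k.
have ab' k i : tnth (a' k) i <= tnth (b k) i by rewrite /a'; case: ifP.
exists a', b; split; [|split] => //.
- by move=> x /Acov[k /= kN xk]; exists k => //; rewrite /a' kN.
- rewrite (nneseries_split _ N); last first.
    by move=> k _; rewrite lee_fin; apply: prodr_ge0 => i _; rewrite subr_ge0.
  rewrite eseries0 ?adde0; last first.
    move=> k Nk _; rewrite /box_vol /a' ltnNge Nk /=.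
    by rewrite (bigD1 (Ordinal n0)) //= subrr mul0r.
  rewrite sumEFin lte_fin big_mkord.
  by under eq_bigr => k _ do rewrite /a' ltn_ord.
Qed.

Lemma box_vol_le (a b : n.-tuple R) (i j : 'I_n) (u v D : R) : i != j -> 1 <= D ->
  (forall l, tnth a l <= tnth b l) ->
  tnth b i - tnth a i <= u -> tnth b j - tnth a j <= v ->
  (forall l, l != i -> l != j -> tnth b l - tnth a l <= D) ->
  box_vol a b <= u * v * D ^+ n.
Proof.
move=> ij D1 ab hi hj hl; have side_ge0 l : 0 <= tnth b l - tnth a l by rewrite subr_ge0.
rewrite /box_vol (bigD1 i) //= (bigD1 j) /=; last by rewrite eq_sym.
set P := \prod_(l | _) _.
have P0 : 0 <= P by apply: prodr_ge0.
have PD : P <= D ^+ n.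
  apply: le_trans (_ : \prod_(l < n) D <= _); last by rewrite prodr_const card_ord.
  rewrite [leRHS](bigID (fun l => (l != i) && (l != j))) /= -[leLHS]mulr1.
  apply: ler_pM => //; first by apply: ler_prod => l /andP[li lj]; rewrite side_ge0 hl.
  by rewrite prodr_const exprn_ege1.
rewrite -mulrA; apply: ler_pM => //; first exact: mulr_ge0.
by apply: ler_pM.
Qed.
End LebesgueNull.

(* Cell r covers the piece of the graph x_i = p + q x_j lying over the r-th of N equal
   slices of [-K, K] in coordinate j. *)
Section AffineGraphCells.
Variables (R : realType) (n : nat) (i j : 'I_n) (p q K : R) (N : nat).

Definition grid (r : nat) : R := - K + r%:R * (2 * K / N%:R).

Definition graph_cell_lo (r : nat) : n.-tuple R :=
  [tuple if l == i then minr (p + q * grid r) (p + q * grid r.+1)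
         else if l == j then grid r else - K | l < n].

Definition graph_cell_hi (r : nat) : n.-tuple R :=
  [tuple if l == i then maxr (p + q * grid r) (p + q * grid r.+1)
         else if l == j then grid r.+1 else K | l < n].

Hypotheses (ij : i != j) (K0 : 0 < K) (N0 : (0 < N)%N).

Let h_gt0 : 0 < 2 * K / N%:R.
Proof. by rewrite divr_gt0 ?ltr0n // mulr_gt0. Qed.

Lemma gridS r : grid r.+1 = grid r + 2 * K / N%:R.
Proof. by rewrite /grid -addn1 natrD; ring. Qed.

Lemma graph_cell_lo_le_hi r l : tnth (graph_cell_lo r) l <= tnth (graph_cell_hi r) l.
Proof.
rewrite !tnth_mktuple; case: ifP => _; first by rewrite ge_min !le_max lexx.
by case: ifP => _; [rewrite gridS lerDl ltW | have := K0; lra].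
Qed.

Let affine_between (y1 y y2 : R) : y1 <= y <= y2 ->
  minr (p + q * y1) (p + q * y2) <= p + q * y <= maxr (p + q * y1) (p + q * y2).
Proof.
move=> /andP[h1 h2]; rewrite ge_min le_max !lerD2l.
have [q0|q0] := leP 0 q.
  by rewrite (ler_wpM2l q0 h1) (ler_wpM2l q0 h2) orbT.
by rewrite (ler_wnM2l (ltW q0) h1) (ler_wnM2l (ltW q0) h2) orbT.
Qed.

Lemma graph_cell_cover :
  [set x : n.-tuple R | tnth x i = p + q * tnth x j /\ forall l, - K <= tnth x l <= K]
  `<=` \bigcup_(r in `I_N) box (graph_cell_lo r) (graph_cell_hi r).
Proof.
move=> x [xi xK]; have /andP[xj1 xj2] := xK j.
have [r rN xr] : exists2 r, (r < N)%N & grid r <= tnth x j <= grid r.+1.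
  pose h := 2 * K / N%:R.
  have q0 : 0 <= (tnth x j + K) / h by rewrite divr_ge0 ?(ltW h_gt0) //; lra.
  have /andP[t1 t2] := truncn_itv q0; set t := truncn _ in t1 t2.
  rewrite ler_pdivlMr // in t1; rewrite ltr_pdivrMr // in t2.
  have [tN|Nt] := ltnP t N.
    by exists t => //; rewrite /grid -/h; apply/andP; split; lra.
  have Nh : N%:R * h = 2 * K by rewrite mulrC divfK // pnatr_eq0 -lt0n.
  have Nth : N.-1%:R * h <= t%:R * h.
    by rewrite ler_pM2r // ler_nat (leq_trans (leq_pred N)).
  exists N.-1; first by rewrite ltn_predL.
  by rewrite prednK // /grid -/h; apply/andP; split; lra.
exists r => //; rewrite /box => l; rewrite !tnth_mktuple.
case: ifP => [/eqP ->|_]; first by rewrite xi affine_between.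
by case: ifP => [/eqP ->|_].
Qed.

Lemma graph_cell_vol r : box_vol (graph_cell_lo r) (graph_cell_hi r) <=
  `|q| * (2 * K / N%:R) * (2 * K / N%:R) * (2 * K + 1) ^+ n.
Proof.
apply: box_vol_le ij _ (graph_cell_lo_le_hi r) _ _ _; rewrite ?tnth_mktuple.
- by have := K0; lra.
- rewrite eqxx maxrBmin opprD addrACA subrr add0r -mulrBr gridS opprD addNKr.
  by rewrite normrM normrN (gtr0_norm h_gt0).
- by rewrite eq_sym (negPf ij) eqxx gridS addrAC subrr add0r.
- by move=> l li lj; rewrite !tnth_mktuple (negPf li) (negPf lj); have := K0; lra.
Qed.
End AffineGraphCells.

Lemma lebesgue_null_subset (R : realType) (n : nat) (A B : set (n.-tuple R)) :
  lebesgue_null A -> B `<=` A -> lebesgue_null B.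
Proof.
move=> nA BA eps eps0; have [a [b [ab [cov vol]]]] := nA eps eps0.
by exists a, b; split => //; split => //; exact: subset_trans cov.
Qed.

Lemma lebesgue_null_affine_graph (R : realType) (n : nat) (i j : 'I_n) (p q K : R) :
  i != j -> 0 < K ->
  lebesgue_null [set x : n.-tuple R |
    tnth x i = p + q * tnth x j /\ forall l, - K <= tnth x l <= K].
Proof.
move=> ij K0; apply: lebesgue_null_finite_cover; first exact: leq_ltn_trans (ltn_ord i).
move=> eps eps0; pose C := `|q| * (2 * K) ^+ 2 * (2 * K + 1) ^+ n.
pose N := (truncn (C / eps)).+1.
have N0 : (0 < N)%N by [].
exists N, (graph_cell_lo i j p q K N), (graph_cell_hi i j p q K N); split.
- exact: graph_cell_lo_le_hi.
- exact: graph_cell_cover.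
- apply: le_lt_trans (_ : _ <= \sum_(k < N) `|q| * (2 * K / N%:R) * (2 * K / N%:R) *
      (2 * K + 1) ^+ n) _; first by apply: ler_sum => k _; exact: graph_cell_vol.
  rewrite sumr_const card_ord -[_ *+ N]mulr_natr.
  have -> : `|q| * (2 * K / N%:R) * (2 * K / N%:R) * (2 * K + 1) ^+ n * N%:R = C / N%:R.
    by rewrite /C; field; rewrite pnatr_eq0.
  have := truncnS_gt (C / eps); rewrite ltr_pdivrMr // => CN.
  by rewrite ltr_pdivrMr ?ltr0n // mulrC.
Qed.

Section AbsContinuous.
Variables (R : realType) (n : nat) (mu : probability (n.-tuple R) R).
Hypothesis mu_ac : continuous_probability mu.

Lemma abs_continuous_plane2 (i j : 'I_n) (al be c : R) : i != j -> al != 0 ->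
  mu [set x | al * tnth x i + be * tnth x j = c] = 0%E.
Proof.
move=> ij al0; pose P := [set x : n.-tuple R | al * tnth x i + be * tnth x j = c].
have mP : measurable P.
  apply: measurable_level; apply: measurable_funD; apply: measurable_funM => //;
    exact: measurable_tnth.
pose nrm (x : n.-tuple R) := \sum_(l < n) `|tnth x l|.
have mnrm : measurable_fun setT nrm.
  apply: measurable_sum => l; apply: measurableT_comp => //; exact: measurable_tnth.
pose F (k : nat) := P `&` [set x | nrm x <= k%:R].
have mF k : measurable (F k) := measurableI _ _ mP (measurable_sublevel _ mnrm).
have F0 k : mu (F k) = 0%E.
  apply: mu_ac (mF k) _.
  have G := lebesgue_null_affine_graph (c / al) (- be / al) ij (ltr0Sn R k).
  apply: lebesgue_null_subset G _.
  move=> x [/= Px nx]; split.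
    by rewrite -Px; field.
  move=> l; have : `|tnth x l| <= k%:R.
    by apply: le_trans nx; rewrite /nrm (bigD1 l) //= lerDl sumr_ge0.
  by rewrite ler_norml -natr1 => /andP[? ?]; apply/andP; split; lra.
apply/eqP; rewrite eq_le measure_ge0 andbT.
apply: le_trans (measure_sigma_subadditive _ mF mP _) _.
  by move=> x Px; exists (truncn (nrm x)).+1 => //; split => //=; rewrite ltW // truncnS_gt.
by rewrite eseries0 // => k _ _; exact: F0.
Qed.
End AbsContinuous.

Lemma measurable_dotp (R : realType) (n : nat) (w : n.-tuple R) :
  measurable_fun setT (dotp w).
Proof.
apply: measurable_sum => i; apply: measurable_funM; first exact: measurable_cst.
exact: measurable_tnth.
Qed.

Section SweepingHyperplanes.
Variables (R : realType) (n : nat) (mu : probability (n.-tuple R) R) (i0 i1 : 'I_n).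
Hypotheses (i01 : i0 != i1) (mu_ac : continuous_probability mu).

Let i10 : (i1 == i0) = false. Proof. by rewrite eq_sym (negPf i01). Qed.

(* Turns from e_i0 (t = 0) to -e_i0 (t = 1) within the (i0, i1)-plane without vanishing. *)
Definition sweep_normal (t : R) : n.-tuple R :=
  [tuple if l == i0 then 1 - 2 * t else if l == i1 then t * (1 - t) else 0 | l < n].

Lemma dotp_sweep_normal t x :
  dotp (sweep_normal t) x = (1 - 2 * t) * tnth x i0 + t * (1 - t) * tnth x i1.
Proof.
rewrite /dotp (bigD1 i0) //= (bigD1 i1) 1?eq_sym //= big1 ?addr0; last first.
  by move=> l /andP[li0 li1]; rewrite tnth_mktuple (negPf li0) (negPf li1) mul0r.
by rewrite !tnth_mktuple eqxx i10 eqxx.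
Qed.

Lemma sweep_coef_neq0 (t : R) : (1 - 2 * t != 0) || (t * (1 - t) != 0).
Proof.
apply/orP; have [t01|t01] := eqVneq (t * (1 - t)) 0; [left | by right].
by move/eqP: t01; rewrite mulf_eq0 subr_eq0 => /orP[] /eqP t01; apply/eqP; lra.
Qed.

Lemma sweep_normal_neq0 t : nonzero_vec (sweep_normal t).
Proof.
case/orP: (sweep_coef_neq0 t) => ct; [exists i0 | exists i1];
  by rewrite tnth_mktuple ?eqxx ?i10 ?eqxx.
Qed.

Lemma mu_sweep_hyperplane t c : mu [set x | dotp (sweep_normal t) x = c] = 0%E.
Proof.
under eq_set do rewrite dotp_sweep_normal.
case/orP: (sweep_coef_neq0 t) => ct; first exact: abs_continuous_plane2.
under eq_set do rewrite addrC.
by apply: abs_continuous_plane2 => //; rewrite i10.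
Qed.

Definition halfspace_mass (E : set (n.-tuple R)) (t c : R) : R :=
  fine (mu (E `&` hplus (sweep_normal t) c)).

Lemma dotp_sweep_normal0 x : dotp (sweep_normal 0) x = tnth x i0.
Proof. by rewrite dotp_sweep_normal !(mulr0, mul0r, subr0, addr0, mul1r). Qed.

Lemma dotp_sweep_normal1 x : dotp (sweep_normal 1) x = - tnth x i0.
Proof. by rewrite dotp_sweep_normal subrr !(mulr0, mul1r, addr0); ring. Qed.

Lemma measurable_hplus (w : n.-tuple R) (c : R) : measurable (hplus w c).
Proof. exact: measurable_superlevel c (measurable_dotp w). Qed.

Lemma measurable_hminus (w : n.-tuple R) (c : R) : measurable (hminus w c).
Proof. exact: measurable_sublevel c (measurable_dotp w). Qed.

Let mu_EFin (A : set (n.-tuple R)) : measurable A -> mu A = (fine (mu A))%:E.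
Proof. by move=> mA; rewrite fineK // fin_num_measure. Qed.

Section HalfspaceMass.
Variables (E : set (n.-tuple R)) (mE : measurable E).

Lemma cvg_halfspace_mass (u v : nat -> R) s c :
  u k @[k --> \oo] --> s -> v k @[k --> \oo] --> c ->
  halfspace_mass E (u k) (v k) @[k --> \oo] --> halfspace_mass E s c.
Proof.
move=> us vc; rewrite /halfspace_mass /hplus.
apply: (cvg_measure_superlevel mE _ _ _ vc (mu_sweep_hyperplane s c)).
- by move=> k; exact: measurable_dotp.
- exact: measurable_dotp.
have c0 : 1 - 2 * u k @[k --> \oo] --> 1 - 2 * s.
  by apply: cvgB; [exact: cvg_cst | apply: cvgM => //; exact: cvg_cst].
have c1 : u k * (1 - u k) @[k --> \oo] --> s * (1 - s).
  by apply: cvgM => //; apply: cvgB => //; exact: cvg_cst.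
move=> x; rewrite dotp_sweep_normal; under eq_fun do rewrite dotp_sweep_normal.
by apply: cvgD; apply: cvgM => //; exact: cvg_cst.
Qed.

Lemma cvg_halfspace_mass_t s c :
  halfspace_mass E t c @[t --> s] --> halfspace_mass E s c.
Proof. by apply: cvg_nbhs_seq => u us; exact: cvg_halfspace_mass us (cvg_cst c). Qed.

Lemma continuous_halfspace_mass t : continuous (halfspace_mass E t).
Proof.
by move=> c; apply: cvg_nbhs_seq => v vc; exact: cvg_halfspace_mass (cvg_cst t) vc.
Qed.

Lemma halfspace_mass_antitone t c c' :
  c <= c' -> halfspace_mass E t c' <= halfspace_mass E t c.
Proof. by move=> cc'; apply: measure_superlevel_antitone => //; exact: measurable_dotp. Qed.

Lemma halfspace_mass_above t v : v < fine (mu E) -> exists c, v < halfspace_mass E t c.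
Proof. by move=> vE; apply: measure_superlevel_gt => //; exact: measurable_dotp. Qed.

Lemma halfspace_mass_below t v : 0 < v -> exists c, halfspace_mass E t c < v.
Proof. by move=> v0; apply: measure_superlevel_lt => //; exact: measurable_dotp. Qed.

Lemma halfspace_mass_eq t v : 0 < v < fine (mu E) -> exists c, halfspace_mass E t c = v.
Proof.
case/andP=> v0 vE; have [clo hlo] := halfspace_mass_above t vE.
have [chi hhi] := halfspace_mass_below t v0.
exact: ivt_unordered (@continuous_halfspace_mass t) (ltW hhi) (ltW hlo).
Qed.

Lemma halfspace_mass_split t c :
  halfspace_mass E t c + fine (mu (E `&` hminus (sweep_normal t) c)) = fine (mu E).
Proof.
apply: measure_superlevel_sublevel => //.
  exact: measurable_dotp.
exact: mu_sweep_hyperplane.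
Qed.

End HalfspaceMass.

Lemma halfspace_mass0_hplus c1 c : c <= c1 ->
  halfspace_mass (hplus (sweep_normal 0) c1) 0 c = fine (mu (hplus (sweep_normal 0) c1)).
Proof.
move=> cc1; rewrite /halfspace_mass setIidl // => x.
by rewrite /hplus /= !dotp_sweep_normal0; exact: le_trans.
Qed.

Lemma halfspace_mass0_hminus c1 c : c1 < c ->
  halfspace_mass (hminus (sweep_normal 0) c1) 0 c = 0.
Proof.
move=> c1c; rewrite /halfspace_mass (_ : _ `&` _ = set0) ?measure0 //.
by apply/seteqP; split => // x []; rewrite /hminus /hplus /= !dotp_sweep_normal0; lra.
Qed.

Lemma halfspace_mass1_hplus c1 : halfspace_mass (hplus (sweep_normal 0) c1) 1 (- c1) = 0.
Proof.
rewrite /halfspace_mass.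
rewrite (@subset_measure0 _ _ _ mu _ [set x | dotp (sweep_normal 0) x = c1]) //.
- exact: measurableI (measurable_hplus _ _) (measurable_hplus _ _).
- exact: measurable_level c1 (measurable_dotp _).
- move=> x []; rewrite /hplus /= dotp_sweep_normal0 dotp_sweep_normal1 => ? ?.
  by apply/eqP; rewrite eq_le; apply/andP; split; lra.
- exact: mu_sweep_hyperplane.
Qed.

Lemma halfspace_mass1_hminus c1 : halfspace_mass (hminus (sweep_normal 0) c1) 1 (- c1) =
  fine (mu (hminus (sweep_normal 0) c1)).
Proof.
rewrite /halfspace_mass setIidl // => x.
by rewrite /hminus /hplus /= dotp_sweep_normal0 dotp_sweep_normal1; lra.
Qed.

Lemma sweep_quadrisection (a1 a2 a3 a4 : R) :
  0 < a1 -> 0 < a2 -> 0 < a3 -> 0 < a4 -> a1 + a2 + a3 + a4 = 1 ->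
  exists (w1 w2 : n.-tuple R) (c1 c2 : R),
    nonzero_vec w1 /\ nonzero_vec w2 /\
    mu (hplus w1 c1 `&` hplus w2 c2) = a1%:E /\
    mu (hminus w1 c1 `&` hplus w2 c2) = a2%:E /\
    mu (hplus w1 c1 `&` hminus w2 c2) = a3%:E /\
    mu (hminus w1 c1 `&` hminus w2 c2) = a4%:E.
Proof.
move=> a1p a2p a3p a4p asum.
have mT : measurable [set: n.-tuple R] by [].
have muT : fine (mu setT) = 1 by rewrite probability_setT.
have [c1 hc1] : exists c1, halfspace_mass setT 0 c1 = a1 + a3.
  by apply: halfspace_mass_eq => //; rewrite muT; apply/andP; split; lra.
pose L := hplus (sweep_normal 0) c1; pose Rg := hminus (sweep_normal 0) c1.
have mL : measurable L := measurable_hplus _ _.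
have mRg : measurable Rg := measurable_hminus _ _.
have muL : fine (mu L) = a1 + a3 by rewrite -hc1 /halfspace_mass setTI.
have muRg : fine (mu Rg) = a2 + a4.
  by have := @halfspace_mass_split _ mT 0 c1; rewrite hc1 setTI muT; lra.
have lower0 c : halfspace_mass L 0 c < a1 -> halfspace_mass Rg 0 c <= a2.
  have [cc1|c1c] := leP c c1; first by rewrite halfspace_mass0_hplus // -/L muL; lra.
  by rewrite halfspace_mass0_hminus // => _; exact: ltW.
have upper1 : exists c, halfspace_mass L 1 c < a1 /\ a2 < halfspace_mass Rg 1 c.
  by exists (- c1); rewrite halfspace_mass1_hplus halfspace_mass1_hminus -/Rg muRg; split; lra.
have a1L : a1 < fine (mu L) by rewrite muL; lra.
have [s [c [hL hR]]] := two_parameter_ivt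
  (@cvg_halfspace_mass_t _ mL) (@cvg_halfspace_mass_t _ mRg)
  (@continuous_halfspace_mass _ mL) (@continuous_halfspace_mass _ mRg)
  (@halfspace_mass_antitone _ mL) (@halfspace_mass_antitone _ mRg)
  (fun t => @halfspace_mass_above _ mL t _ a1L) (fun t => @halfspace_mass_below _ mL t _ a1p)
  lower0 upper1.
have splitL := @halfspace_mass_split _ mL s c; have splitR := @halfspace_mass_split _ mRg s c.
rewrite hL muL in splitL; rewrite hR muRg in splitR.
have mHp := measurable_hplus (sweep_normal s) c.
have mHm := measurable_hminus (sweep_normal s) c.
exists (sweep_normal 0), (sweep_normal s), c1, c.
do 2 (split; first exact: sweep_normal_neq0).
split; first by rewrite mu_EFin; [congr EFin; exact: hL | exact: measurableI mL mHp].
split; first by rewrite mu_EFin; [congr EFin; exact: hR | exact: measurableI mRg mHp].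
split; first by rewrite mu_EFin; [congr EFin; lra | exact: measurableI mL mHm].
by rewrite mu_EFin; [congr EFin; lra | exact: measurableI mRg mHm].
Qed.

End SweepingHyperplanes.

Theorem mainTheorem7 (R : realType) (n : nat)
    (mu : probability (n.-tuple R) R) (a1 a2 a3 a4 : R) :
  (2 <= n)%N ->
  continuous_probability mu ->
  0 < a1 < 1 -> 0 < a2 < 1 -> 0 < a3 < 1 -> 0 < a4 < 1 ->
  a1 + a2 + a3 + a4 = 1 ->
  exists (w1 w2 : n.-tuple R) (c1 c2 : R),
    nonzero_vec w1 /\ nonzero_vec w2 /\
    mu (hplus w1 c1 `&` hplus w2 c2) = a1%:E /\
    mu (hminus w1 c1 `&` hplus w2 c2) = a2%:E /\
    mu (hplus w1 c1 `&` hminus w2 c2) = a3%:E /\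
    mu (hminus w1 c1 `&` hminus w2 c2) = a4%:E.
Proof.
move=> n2 mu_ac /andP[a1p _] /andP[a2p _] /andP[a3p _] /andP[a4p _] asum.
have i01 : (Ordinal (ltnW n2) : 'I_n) != Ordinal n2 by [].
exact: (@sweep_quadrisection R n mu _ _ i01 mu_ac a1 a2 a3 a4 a1p a2p a3p a4p asum).
Qed.
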